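(* Let $a$ and $b$ be relatively prime integers with $1\le a<b$. Then there exist a positive integer $n$ and a permutation $\pi=(\pi_1,\ldots,\pi_n)$ of $\{1,\ldots,n\}$ such that $\{\pi_{i+1}-\pi_i : 1\le i\le n-1\}=\{a,-b\}$; that is, $(a,-b)$ is a $D$-pair.
   Context: A pair $(p,q)$ of distinct integers is called a $D$-pair if for some $n\ge 1$ there is a permutation $\pi$ of $\{1,\ldots,n\}$ whose set of discrete derivative values $\{\pi_{i+1}-\pi_i: 1\le i\le n-1\}$ equals $\{p,q\}$. *)

From mathcomp Require Import all_boot all_order all_algebra.
Set Implicit Arguments. Unset Strict Implicit. Unset Printing Implicit Defensive.
Import Order.TTheory GRing.Theory Num.Theory.
Local Open Scope ring_scope.

(* A permutation pi = (pi_1,...,pi_n) of {1,...,n} is represented as the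
   sequence [:: pi_1; ...; pi_n] of integers, required to be a rearrangement
   of [:: 1; 2; ...; n]. *)
Definition is_perm_seq (n : nat) (s : seq int) : Prop :=
  perm_eq s [seq (i%:Z) | i <- iota 1 n].

Definition derivs (s : seq int) : seq int :=
  [seq (x.2 - x.1) | x <- zip s (behead s)].

Definition D_pair (p q : int) : Prop :=
  p <> q /\
  exists (n : nat) (s : seq int),
    (1 <= n)%N /\ is_perm_seq n s /\ (derivs s =i [:: p; q]).

(** Put N := a + b. Since a is a unit modulo N, the multiples 0, a, 2a, ...,
    (N-1)a run through all residues modulo N; representing each residue by an
    element of {1, ..., N} gives a permutation of {1, ..., N}. Consecutive
    representatives differ by a modulo N, and as both lie in {1, ..., N} the
    actual difference is a or a - N = -b. The first three terms N, a, 2a show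
    that both values occur (2a < N because a < b). *)

From mathcomp Require Import all_boot all_order all_algebra zify.
Import Order.TTheory GRing.Theory Num.Theory.
Set Implicit Arguments.
Unset Strict Implicit.
Local Open Scope ring_scope.

Lemma derivs_map_iota (g : nat -> int) (i m : nat) :
  derivs [seq g k | k <- iota i m.+1] = [seq g k.+1 - g k | k <- iota i m].
Proof.
by elim: m i => [|m IHm] i //=; rewrite /derivs /= in IHm *; rewrite IHm.
Qed.

Lemma eqn_modMr_coprime (N a k1 k2 : nat) : coprime a N ->
  (k1 * a == k2 * a %[mod N])%N = (k1 == k2 %[mod N])%N.
Proof.
move=> coaN; wlog le_k21 : k1 k2 / (k2 <= k1)%N.
  move=> W; have [/W //|/ltnW/W le_k12] := leqP k2 k1.
  by rewrite eq_sym le_k12 eq_sym.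
rewrite !eqn_mod_dvd ?leq_mul2r ?le_k21 ?orbT //.
by rewrite -mulnBl Gauss_dvdl // coprime_sym.
Qed.

Section Residues.

Variable N : nat.
Hypothesis N_gt0 : (0 < N)%N.

(* The representative of x modulo N in {1, ..., N}. *)
Definition resid1 (x : nat) : nat := ((x + N.-1) %% N).+1.

Lemma resid1_le (x : nat) : (resid1 x <= N)%N.
Proof. exact: ltn_pmod. Qed.

Lemma resid1_id (x : nat) : (0 < x <= N)%N -> resid1 x = x.
Proof.
move=> /andP[x_gt0 x_leN]; rewrite /resid1.
have -> : (x + N.-1 = x.-1 + N)%N by lia.
by rewrite modnDr modn_small; lia.
Qed.

Lemma resid1_0 : resid1 0 = N.
Proof. by rewrite /resid1 add0n modn_small; lia. Qed.

Lemma resid1_inj_mod (x y : nat) : resid1 x = resid1 y -> (x = y %[mod N])%N.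
Proof. by move=> [] /eqP; rewrite eqn_modDr => /eqP. Qed.

Lemma resid1D (x a : nat) : (a <= N)%N ->
  (resid1 (x + a) = resid1 x + a \/ resid1 (x + a) + N = resid1 x + a)%N.
Proof.
move=> a_leN; rewrite /resid1 addnAC -modnDml.
have := ltn_pmod (x + N.-1) N_gt0; set r := ((x + N.-1) %% N)%N => r_ltN.
have [ra_ltN | ra_geN] := ltnP (r + a) N; first by left; rewrite modn_small.
have -> : (r + a = (r + a - N) + N)%N by lia.
by right; rewrite modnDr modn_small; lia.
Qed.

End Residues.

Definition resid1_multiples (N a : nat) : seq nat :=
  [seq resid1 N (k * a) | k <- iota 0 N].

Lemma resid1_multiples_uniq (N a : nat) :
  coprime a N -> uniq (resid1_multiples N a).
Proof.
move=> coaN; rewrite map_inj_in_uniq ?iota_uniq // => k1 k2.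
rewrite !mem_iota !add0n => /andP[_ k1_ltN] /andP[_ k2_ltN].
move=> /resid1_inj_mod /eqP; rewrite eqn_modMr_coprime // !modn_small //.
exact/eqP.
Qed.

Lemma resid1_multiples_perm (N a : nat) :
  coprime a N -> perm_eq (resid1_multiples N a) (iota 1 N).
Proof.
move=> coaN; have sub_iota : {subset resid1_multiples N a <= iota 1 N}.
  move=> _ /mapP[k k_lt ->]; have N_gt0 : (0 < N)%N by case: N {coaN} k_lt.
  by rewrite mem_iota add1n ltnS resid1_le.
have [|_ eq_iota] := uniq_min_size (resid1_multiples_uniq coaN) sub_iota.
  by rewrite size_map !size_iota.
by rewrite uniq_perm ?resid1_multiples_uniq ?iota_uniq.
Qed.

Lemma derivs_resid1_multiples (N a : nat) : (0 < a)%N -> (a.*2 < N)%N ->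
  derivs [seq x%:Z | x <- resid1_multiples N a] =i [:: a%:Z; a%:Z - N%:Z].
Proof.
move=> a_gt0 a2_ltN; have N_gt0 : (0 < N)%N by lia.
have step k :
    (resid1 N (k.+1 * a))%:Z - (resid1 N (k * a))%:Z \in [:: a%:Z; a%:Z - N%:Z].
  rewrite mulSnr !inE; have a_leN : (a <= N)%N by lia.
  by case: (resid1D N_gt0 (k * a) a_leN) => ?; apply/orP; [left|right]; lia.
rewrite /resid1_multiples -map_comp -(prednK N_gt0) derivs_map_iota prednK // => d.
apply/mapP/idP => [[k _ ->]|]; first exact: step.
have resid1_a : resid1 N (1 * a) = a by rewrite mul1n resid1_id ?a_gt0; lia.
rewrite !inE => /orP[] /eqP ->.
- exists 1%N; first by rewrite mem_iota; lia.
  by rewrite /= resid1_a resid1_id; lia.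
- exists 0%N; first by rewrite mem_iota; lia.
  by rewrite /= resid1_a mul0n resid1_0.
Qed.

Theorem theorem2p5 (a b : int) :
  (1 <= a) -> (a < b) -> coprimez a b ->
  D_pair a (- b).
Proof.
case: a b => [a|//] [b|//] a_ge1 a_lt_b; rewrite /coprimez /= => coab.
have coaN : coprime a (a + b) by rewrite /coprime gcdnDl.
split; first lia.
exists (a + b)%N, [seq x%:Z | x <- resid1_multiples (a + b) a]; split; first lia.
split; first exact/perm_map/resid1_multiples_perm.
have a_sub_N : a%:Z - (a + b)%N%:Z = - b%:Z by lia.
by move=> d; rewrite derivs_resid1_multiples; [rewrite a_sub_N | lia | lia].
Qed.
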